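(* Let $G=(V,E)$ be an $n$-node graph with maximum degree at most $\Delta$ and exact maximum degree $\Delta^*\le\Delta$, and let $S\subseteq V$ be a node set in which every node has degree at least $\delta_S$. For every $\varepsilon>0$ there is a deterministic LOCAL algorithm with round complexity $T_{AM}(\varepsilon)$ that computes a matching of $G$ hitting at least a $(1-\varepsilon)\cdot\frac{\delta_S}{\Delta^*+1}$-fraction of the nodes in $S$.
   Context: LOCAL model: synchronous rounds on the $n$-node network graph, unique $O(\log n)$-bit identifiers, unbounded message size and local computation; each node knows whether it belongs to $S$. A matching hits a node if the node is an endpoint of one of its edges. $T_{AM}(\varepsilon)$ denotes the round complexity of a deterministic LOCAL algorithm that, on any $n$-node graph of maximum degree at most $\Delta$ with positive edge weights whose ratio of maximum to minimum weight is $n^{O(1)}$, computes a matching which is maximal and whose weight is at least $(1-\varepsilon)$ times the weight of a maximum-weight matching. *)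

From HB Require Import structures.
From mathcomp Require Import all_boot all_order all_algebra.
Set Implicit Arguments. Unset Strict Implicit. Unset Printing Implicit Defensive.
Import Order.TTheory GRing.Theory Num.Theory.

(* An n-node simple graph whose node identifiers are < n^k
   (i.e. O(log n)-bit identifiers, k a constant). *)
Definition simple_graph (n k : nat) (V : seq nat) (E : rel nat) : Prop :=
  [/\ uniq V, size V = n & {in V, forall v, v < n ^ k}] /\
  [/\ (forall x y, E x y -> (x \in V) && (y \in V)),
      (forall x, ~~ E x x) & (forall x y, E x y = E y x)].

Definition deg (V : seq nat) (E : rel nat) (v : nat) : nat := count (E v) V.

Definition max_deg (V : seq nat) (E : rel nat) : nat := \max_(v <- V) deg V E v.

Definition max_deg_le (V : seq nat) (E : rel nat) (D : nat) : Prop :=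
  {in V, forall v, deg V E v <= D}.

Fixpoint ball (V : seq nat) (E : rel nat) (r v : nat) : seq nat :=
  match r with
  | 0 => [:: v]
  | r'.+1 => let B := ball V E r' v in
             [seq u <- V | (u \in B) || has (fun x => E x u) B]
  end.

(* Two labelled instances look identical to node v after T rounds:
   same node labels (inputs) on the radius-T ball, and same edges (with
   the same edge labels) incident to the radius-(T-1) ball. *)
Definition same_view (NL EL : Type) (T v : nat)
  (V1 : seq nat) (E1 : rel nat) (nl1 : nat -> NL) (el1 : nat -> nat -> EL)
  (V2 : seq nat) (E2 : rel nat) (nl2 : nat -> NL) (el2 : nat -> nat -> EL) : Prop :=
  (forall u, u \in ball V1 E1 T v -> nl1 u = nl2 u) /\
  (forall x y, 0 < T -> x \in ball V1 E1 T.-1 v ->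
     E1 x y = E2 x y /\ (E1 x y -> el1 x y = el2 x y)).

(* Outputs are matching partners. *)
Definition algo (NL EL : Type) :=
  seq nat -> rel nat -> (nat -> NL) -> (nat -> nat -> EL) -> nat -> option nat.

Definition local_alg (NL EL : Type)
  (P : seq nat -> rel nat -> (nat -> NL) -> (nat -> nat -> EL) -> Prop)
  (T : nat) (A : algo NL EL) : Prop :=
  forall V1 E1 nl1 el1 V2 E2 nl2 el2 v,
    P V1 E1 nl1 el1 -> P V2 E2 nl2 el2 -> v \in V1 -> v \in V2 ->
    same_view T v V1 E1 nl1 el1 V2 E2 nl2 el2 ->
    A V1 E1 nl1 el1 v = A V2 E2 nl2 el2 v.

Local Open Scope ring_scope.

Definition is_matching (V : seq nat) (E : rel nat) (M : nat -> option nat) : Prop :=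
  forall v u, v \in V -> M v = Some u -> E v u /\ M u = Some v.

Definition matched (M : nat -> option nat) (v : nat) : bool := M v != None.

Definition is_maximal (E : rel nat) (M : nat -> option nat) : Prop :=
  forall x y, E x y -> matched M x || matched M y.

(* total weight, each matched edge counted once (from its smaller endpoint) *)
Definition mweight (R : numDomainType) (V : seq nat) (w : nat -> nat -> R)
  (M : nat -> option nat) : R :=
  \sum_(v <- V) (match M v with Some u => if (v < u)%N then w v u else 0 | None => 0 end).

Definition AM_class (R : numDomainType) (n k D c : nat)
  (V : seq nat) (E : rel nat) (_ : nat -> unit) (w : nat -> nat -> R) : Prop :=
  [/\ simple_graph n k V E, max_deg_le V E D,
      (forall x y, E x y -> 0 < w x y),
      (forall x y, w x y = w y x) &
      (forall x y x' y', E x y -> E x' y' -> w x y <= (n ^ c)%:R * w x' y')].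

Definition AM_correct (R : numDomainType) (n k D c : nat) (eps : R)
  (A : algo unit R) : Prop :=
  forall V E w, AM_class n k D c V E (fun _ => tt) w ->
    let M := A V E (fun _ => tt) w in
    [/\ is_matching V E M, is_maximal E M &
        forall M', is_matching V E M' -> (1 - eps) * mweight V w M' <= mweight V w M].

(* instances for the lemma: n nodes, max degree <= D, input bit S v *)
Definition S_class (n k D : nat)
  (V : seq nat) (E : rel nat) (_ : nat -> bool) (_ : nat -> nat -> unit) : Prop :=
  simple_graph n k V E /\ max_deg_le V E D.

Definition S_correct (R : numFieldType) (n k D : nat) (eps : R)
  (B : algo bool unit) : Prop :=
  forall V E S, S_class n k D V E S (fun _ _ => tt) ->
    let M := B V E S (fun _ _ => tt) in
    is_matching V E M /\
    forall deltaS : nat, {in V, forall v, S v -> (deltaS <= deg V E v)%N} ->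
      (1 - eps) * (deltaS%:R / (max_deg V E).+1%:R) * (count S V)%:R
        <= (count (fun v => S v && matched M v) V)%:R.

From HB Require Import structures.
From mathcomp Require Import all_boot all_order all_algebra.
From mathcomp Require Import zify.
Set Implicit Arguments. Unset Strict Implicit. Unset Printing Implicit Defensive.
Import Order.TTheory GRing.Theory Num.Theory.

(* Keep the edges of G meeting S and weight each by its number of endpoints in
   S, so that the weight of a matching is the number of nodes of S it hits; this
   instance is computed without communication, so running the T_AM algorithm on
   it takes T rounds.  By Vizing's theorem the kept edges have a proper colouring
   with Delta* + 1 colours.  Its colour classes are matchings which together hit
   every v in S exactly deg v >= delta_S times, so the best of them hits at least
   delta_S |S| / (Delta* + 1) nodes of S, and the approximation loses at most a
   factor 1 - eps against it.  Vizing's theorem is proved by the classical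
   induction on the edges: a new edge is coloured by rotating a maximal fan at
   one of its ends, after a Kempe-chain swap if the fan closes on itself. *)

Lemma iter_mul_period (T : Type) (f : T -> T) p q x :
  iter p f x = x -> iter (q * p) f x = x.
Proof. by move=> px; elim: q => //= q IH; rewrite mulSn iterD IH. Qed.

Lemma iter_gcdn_period (T : Type) (f : T -> T) m n x : 0 < m ->
  iter m f x = x -> iter n f x = x -> iter (gcdn m n) f x = x.
Proof.
move=> m0 mx nx; have [q _ /dvdnP [r def_r]] := Bezoutl n m0.
by rewrite -{1}(iter_mul_period q nx) -iterD def_r iter_mul_period.
Qed.

Lemma gcdn_odd_double_dvd m d : odd m -> gcdn m d.*2 %| d.
Proof. by move=> om; rewrite -mul2n Gauss_gcdr ?coprimen2 // dvdn_gcdr. Qed.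

(* [a] and [b] stand for the neighbour maps along two colours, and [u] is fixed
   by [a]; the orbit of [u] under [kempe_step] is then its Kempe chain. *)
Section KempeChain.
Variables (V : seq nat) (a b : nat -> nat) (u : nat).
Hypotheses (aK : involutive a) (bK : involutive b)
  (aV : forall x, x \in V -> a x \in V) (bV : forall x, x \in V -> b x \in V)
  (uV : u \in V) (au : a u = u).

Definition kempe_step x := a (b x).

Lemma iter_kempe_step_inj n : injective (iter n kempe_step).
Proof.
elim: n => [|n IH] x y //= /(inj_comp (inv_inj aK) (inv_inj bK)).
exact: IH.
Qed.

Lemma iter_kempe_stepV n x : x \in V -> iter n kempe_step x \in V.
Proof. by move=> xV; elim: n => //= n IH; rewrite /kempe_step aV // bV. Qed.

Lemma kempe_step_periodic : exists2 L, 0 < L & iter L kempe_step u = u.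
Proof.
set s := [seq iter i kempe_step u | i <- iota 0 (size V).+1].
have /(uniqPn 0) [i [j [ij js]]] : ~~ uniq s.
  have sV : {subset s <= V} by move=> _ /mapP [k _ ->]; apply: iter_kempe_stepV.
  by apply/negP => /uniq_leq_size/(_ sV); rewrite size_map size_iota ltnn.
rewrite size_map size_iota in js; have iV := ltn_trans ij js.
rewrite !(nth_map 0) ?size_iota ?nth_iota ?add0n //.
rewrite -(subnKC (ltnW ij)) iterD => /(@iter_kempe_step_inj i) ji.
by exists (j - i); [rewrite subn_gt0 | rewrite -ji].
Qed.

Lemma iter_kempe_step_b k x : iter k kempe_step (b (iter k kempe_step x)) = b x.
Proof.
elim: k x => [|k IH] x //.
by rewrite iterSr iterS {2}/kempe_step bK aK IH.
Qed.

Variable L : nat.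
Hypotheses (L0 : 0 < L) (Lu : iter L kempe_step u = u).

Lemma iter_kempe_step_mod n : iter n kempe_step u = iter (n %% L) kempe_step u.
Proof. by rewrite {1}(divn_eq n L) addnC iterD iter_mul_period. Qed.

Lemma iter_kempe_step_period n : iter L kempe_step (iter n kempe_step u) = iter n kempe_step u.
Proof. by rewrite -iterD addnC iterD Lu. Qed.

Lemma b_iter_kempe_step n : iter n.+1 kempe_step (b (iter n kempe_step u)) = u.
Proof. by rewrite iterS iter_kempe_step_b /kempe_step bK au. Qed.

Lemma b_in_kempe_orbit n : exists m, b (iter n kempe_step u) = iter m kempe_step u.
Proof.
set z := b (iter n kempe_step u).
have zL : iter L kempe_step z = z.
  by rewrite /z -{2}(iter_kempe_step_b L (iter n kempe_step u)) iter_kempe_step_period.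
exists (n.+1 * L - n.+1).
by rewrite -(b_iter_kempe_step n) -/z -iterD subnK ?leq_pmulr // iter_mul_period.
Qed.

Lemma a_in_kempe_orbit n : exists m, a (iter n kempe_step u) = iter m kempe_step u.
Proof.
have [m e] := b_in_kempe_orbit n; exists m.+1.
by rewrite iterS -e /kempe_step bK.
Qed.

(* An end [iter n kempe_step u] fixed by [b] yields the odd period [2n + 1];
   two ends [n1 <= n2] also yield the period [2 (n2 - n1)], so the gcd of the
   two, which divides [n2 - n1], is a period as well. *)
Lemma kempe_orbit_end n1 n2 :
  b (iter n1 kempe_step u) = iter n1 kempe_step u ->
  b (iter n2 kempe_step u) = iter n2 kempe_step u ->
  iter n1 kempe_step u = iter n2 kempe_step u.
Proof.
wlog le12 : n1 n2 / n1 <= n2.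
  by move=> H h1 h2; case: (leqP n1 n2) => [/H|/ltnW/H]; [apply|move=> ->].
have odd_period n : b (iter n kempe_step u) = iter n kempe_step u ->
    iter (n.+1 + n) kempe_step u = u.
  by move=> bn; rewrite iterD -{1}bn b_iter_kempe_step.
move=> /odd_period p1 /odd_period; set d := n2 - n1.
rewrite -(subnK le12) -/d (_ : (d + n1).+1 + (d + n1) = d.*2 + (n1.+1 + n1)); last by lia.
rewrite iterD p1 => pd.
have /dvdnP [q ->] : gcdn (n1.+1 + n1) d.*2 %| d.
  by apply: gcdn_odd_double_dvd; rewrite addSn /= addnn odd_double.
by rewrite addnC iterD iter_mul_period // iter_gcdn_period.
Qed.

Definition in_kempe_chain y := has (fun n => iter n kempe_step u == y) (iota 0 L).

Lemma in_kempe_chainP y :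
  reflect (exists n, iter n kempe_step u = y) (in_kempe_chain y).
Proof.
apply: (iffP hasP) => [[n _ /eqP e]|[n e]]; first by exists n.
exists (n %% L); first by rewrite mem_iota add0n ltn_pmod.
by rewrite -iter_kempe_step_mod e.
Qed.

Lemma in_kempe_chain_u : in_kempe_chain u.
Proof. by apply/in_kempe_chainP; exists 0. Qed.

Lemma in_kempe_chain_a y : in_kempe_chain (a y) = in_kempe_chain y.
Proof.
suff imp z : in_kempe_chain z -> in_kempe_chain (a z).
  by apply/idP/idP => /imp //; rewrite aK.
case/in_kempe_chainP => n <-; have [m e] := a_in_kempe_orbit n.
by apply/in_kempe_chainP; exists m.
Qed.

Lemma in_kempe_chain_b y : in_kempe_chain (b y) = in_kempe_chain y.
Proof.
suff imp z : in_kempe_chain z -> in_kempe_chain (b z).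
  by apply/idP/idP => /imp //; rewrite bK.
case/in_kempe_chainP => n <-; have [m e] := b_in_kempe_orbit n.
by apply/in_kempe_chainP; exists m.
Qed.

Lemma kempe_chain_end_uniq y1 y2 : in_kempe_chain y1 -> in_kempe_chain y2 ->
  b y1 = y1 -> b y2 = y2 -> y1 = y2.
Proof.
by case/in_kempe_chainP => n1 <- /in_kempe_chainP [n2 <-]; apply: kempe_orbit_end.
Qed.

End KempeChain.

Definition edge_colouring (K : nat) (F : rel nat) (col : nat -> nat -> nat) :=
  (forall x y, F x y -> col x y = col y x /\ col x y < K) /\
  (forall x y z, F x y -> F x z -> col x y = col x z -> y = z).

Definition missing (V : seq nat) (F : rel nat) (col : nat -> nat -> nat) x c :=
  ~~ has (fun y => F x y && (col x y == c)) V.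

(* The neighbour of [x] along the edge of colour [c], or [x] itself if [c] is
   missing at [x]. *)
Definition colour_nbr (V : seq nat) (F : rel nat) (col : nat -> nat -> nat) x c :=
  head x [seq y <- V | F x y && (col x y == c)].

Definition swap_colour (al be c : nat) :=
  if c == al then be else if c == be then al else c.

Lemma swap_colourK al be : involutive (swap_colour al be).
Proof.
move=> c; rewrite /swap_colour.
case: (eqVneq c al) => [->|ca].
  by case: (eqVneq be al) => [->|ba]; rewrite ?eqxx // (negbTE ba) eqxx.
case: (eqVneq c be) => [->|cb]; first by rewrite eqxx.
by rewrite (negbTE ca) (negbTE cb).
Qed.

Lemma swap_colour_lt K al be c :
  al < K -> be < K -> c < K -> swap_colour al be c < K.
Proof. by rewrite /swap_colour; case: ifP => // _; case: ifP. Qed.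

Section EdgeColouring.
Variables (V : seq nat) (K : nat) (F : rel nat) (col : nat -> nat -> nat).
Hypotheses (uV : uniq V) (FV : forall x y, F x y -> x \in V)
  (Fsym : symmetric F) (Firr : irreflexive F) (Fcol : edge_colouring K F col).

Lemma edge_memr x y : F x y -> y \in V.
Proof. by rewrite Fsym; apply: FV. Qed.

Lemma col_sym x y : F x y -> col x y = col y x.
Proof. by case: Fcol => h _ /h []. Qed.

Lemma col_lt x y : F x y -> col x y < K.
Proof. by case: Fcol => h _ /h []. Qed.

Lemma col_inj x y z : F x y -> F x z -> col x y = col x z -> y = z.
Proof. by case: Fcol => _; apply. Qed.

Lemma missingP x c :
  reflect (forall y, F x y -> col x y != c) (missing V F col x c).
Proof.
apply: (iffP hasPn) => h y; last first.
  by move=> _; rewrite negb_and -implybE; apply/implyP; apply: h.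
by move=> Fxy; have := h y (edge_memr Fxy); rewrite Fxy.
Qed.

Lemma colour_nbr_eq x y c : F x y -> col x y = c -> colour_nbr V F col x c = y.
Proof.
move=> Fxy e; rewrite /colour_nbr.
have : y \in [seq y <- V | F x y && (col x y == c)].
  by rewrite mem_filter Fxy e eqxx (edge_memr Fxy).
case E: [seq y <- V | _] => [//|z s] _ /=.
have : z \in [seq y <- V | F x y && (col x y == c)] by rewrite E mem_head.
rewrite mem_filter => /andP [/andP [Fxz /eqP ez] _].
by apply: col_inj Fxz Fxy _; rewrite ez e.
Qed.

Lemma colour_nbr_missing x c : missing V F col x c -> colour_nbr V F col x c = x.
Proof. by rewrite /missing /colour_nbr has_filter negbK => /eqP ->. Qed.

Lemma colour_nbrP x c :
  (F x (colour_nbr V F col x c) /\ col x (colour_nbr V F col x c) = c) \/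
  (missing V F col x c /\ colour_nbr V F col x c = x).
Proof.
case m: (missing V F col x c); first by right; rewrite colour_nbr_missing.
left; move: m; rewrite /missing /colour_nbr has_filter negbK.
case e: [seq y <- V | _] => [//|z s] _ /=.
have : z \in [seq y <- V | F x y && (col x y == c)] by rewrite e mem_head.
by rewrite mem_filter => /andP [/andP [-> /eqP ->]].
Qed.

Lemma colour_nbrK c : involutive (colour_nbr V F col ^~ c).
Proof.
move=> x; case: (colour_nbrP x c) => [[Fxy e]|[_ e]]; last by rewrite !e.
by apply: colour_nbr_eq; rewrite 1?Fsym // -col_sym.
Qed.

Lemma colour_nbr_mem x c : x \in V -> colour_nbr V F col x c \in V.
Proof.
by move=> xV; case: (colour_nbrP x c) => [[Fxy _]|[_ ->]] //; apply: edge_memr Fxy.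
Qed.

Lemma count_missing_colours x :
  count (fun c => ~~ missing V F col x c) (iota 0 K) = count (F x) V.
Proof.
set cs := [seq col x y | y <- [seq y <- V | F x y]].
have ucs : uniq cs.
  rewrite map_inj_in_uniq ?filter_uniq //.
  by move=> y z; rewrite !mem_filter => /andP [Fy _] /andP [Fz _]; apply: col_inj.
have memcs c : (c \in cs) = ~~ missing V F col x c.
  rewrite /missing negbK; apply/mapP/hasP => [[y]|[y yV /andP [Fy /eqP <-]]].
    by rewrite mem_filter => /andP [Fy yV] ->; exists y => //; rewrite Fy eqxx.
  by exists y => //; rewrite mem_filter Fy.
rewrite (eq_count (a2 := mem cs)) => [|c]; last by rewrite /= memcs.
rewrite -!size_filter -(size_map (col x)).
apply: perm_size; apply: uniq_perm; rewrite ?filter_uniq ?iota_uniq // => c.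
rewrite mem_filter mem_iota add0n /=; case: (boolP (c \in cs)) => //= /mapP [y].
by rewrite mem_filter => /andP [Fy _] ->; rewrite col_lt.
Qed.

Definition missing_colour x := nth 0 [seq c <- iota 0 K | missing V F col x c] 0.

Lemma missing_colourP x : count (F x) V < K ->
  missing_colour x < K /\ missing V F col x (missing_colour x).
Proof.
move=> dxK; have : has (missing V F col x) (iota 0 K).
  have := count_predC (missing V F col x) (iota 0 K).
  rewrite /predC /= count_missing_colours size_iota has_count; lia.
rewrite has_filter /missing_colour; case e: [seq c <- iota 0 K | _] => [//|c s] _ /=.
have : c \in [seq c <- iota 0 K | missing V F col x c] by rewrite e mem_head.
by rewrite mem_filter mem_iota add0n => /andP [-> /andP [_ ->]].
Qed.

Section KempeSwap.
Variables (al be : nat) (O : pred nat).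
Hypotheses (alK : al < K) (beK : be < K)
  (O_al : forall x y, F x y -> col x y = al -> O x = O y)
  (O_be : forall x y, F x y -> col x y = be -> O x = O y).

Definition kempe_swap x y := if O x then col x y else swap_colour al be (col x y).

Lemma kempe_swap_colouring : edge_colouring K F kempe_swap.
Proof.
split=> [x y Fxy|x y z Fxy Fxz]; last first.
  by rewrite /kempe_swap; case: ifP => _; [|move/(can_inj (swap_colourK al be))];
    apply: col_inj.
rewrite /kempe_swap; split; last by case: ifP => _; rewrite ?swap_colour_lt ?col_lt.
have O_swap : O x != O y -> swap_colour al be (col x y) = col x y.
  move=> nO; rewrite /swap_colour.
  case: eqP => [e|_]; first by move: nO; rewrite (O_al Fxy e) eqxx.
  by case: eqP => [e|_] //; move: nO; rewrite (O_be Fxy e) eqxx.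
rewrite -(col_sym Fxy).
by case Ox: (O x); case Oy: (O y); rewrite // O_swap ?Ox ?Oy.
Qed.

Lemma missing_kempe_swap x c : missing V F kempe_swap x c =
  if O x then missing V F col x c else missing V F col x (swap_colour al be c).
Proof.
rewrite /missing /kempe_swap; case: ifP => // _; congr (~~ _); apply: eq_has => y.
by congr (_ && _); apply/eqP/eqP => [<-|->]; rewrite swap_colourK.
Qed.

End KempeSwap.

Lemma kempe_chain_exists u al be : u \in V -> missing V F col u al ->
  exists O : pred nat, [/\ O u,
    forall x y, F x y -> col x y = al -> O x = O y,
    forall x y, F x y -> col x y = be -> O x = O y &
    forall x y, O x -> O y -> missing V F col x be -> missing V F col y be -> x = y].
Proof.
move=> uinV u_al.
pose a := colour_nbr V F col ^~ al; pose b := colour_nbr V F col ^~ be.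
have aK : involutive a := colour_nbrK al.
have bK : involutive b := colour_nbrK be.
have aV x : x \in V -> a x \in V := colour_nbr_mem al.
have bV x : x \in V -> b x \in V := colour_nbr_mem be.
have au : a u = u := colour_nbr_missing u_al.
have [L L0 Lu] := kempe_step_periodic aK bK aV bV uinV.
exists (in_kempe_chain a b u L); split.
- exact: in_kempe_chain_u.
- move=> x y Fxy /(colour_nbr_eq Fxy) <-.
  by rewrite (in_kempe_chain_a aK bK au L0 Lu).
- move=> x y Fxy /(colour_nbr_eq Fxy) <-.
  by rewrite (in_kempe_chain_b aK bK au L0 Lu).
move=> x y Ox Oy /colour_nbr_missing xbe /colour_nbr_missing ybe.
exact: (kempe_chain_end_uniq aK bK uinV au L0 Lu Ox Oy xbe ybe).
Qed.

Definition add_edge u v0 x y :=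
  F x y || (x == u) && (y == v0) || (x == v0) && (y == u).

Section FanRotation.
Variables (u v0 : nat) (f : nat -> nat) (r : nat) (mc : nat -> nat) (g : nat).
Hypotheses (uv0 : u != v0) (f0 : f 0 = v0)
  (fF : forall i, 0 < i <= r -> F u (f i))
  (finj : forall i j, i <= r -> j <= r -> f i = f j -> i = j)
  (flink : forall i, i < r -> col u (f i.+1) = mc (f i))
  (fmiss : forall i, i < r -> missing V F col (f i) (mc (f i)))
  (gK : g < K) (gu : missing V F col u g) (gr : missing V F col (f r) g).

Definition in_fan y := has (fun i => f i == y) (iota 0 r.+1).

Definition fan_colour y := if y == f r then g else mc y.

(* Each fan edge [u f(i)] takes the colour of [u f(i+1)], which is missing at
   [f i], and the last one takes [g], missing at both of its ends; this colours
   the new edge [u v0 = u f(0)]. *)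
Definition fan_rotate x y :=
  if (x == u) && in_fan y then fan_colour y
  else if (y == u) && in_fan x then fan_colour x else col x y.

Lemma in_fanP y : reflect (exists2 i, i <= r & f i = y) (in_fan y).
Proof.
apply: (iffP hasP) => [[i] | [i ir <-]].
  by rewrite mem_iota add0n ltnS => ir /eqP <-; exists i.
by exists i; rewrite ?mem_iota ?add0n ?ltnS.
Qed.

Lemma fan_neq_u i : i <= r -> f i != u.
Proof.
case: i => [|i] ir; first by rewrite f0 eq_sym.
by apply/eqP => e; have := fF (i:=i.+1) ir; rewrite e Firr.
Qed.

Lemma notin_fan_u : ~~ in_fan u.
Proof. by apply/in_fanP => [[i ir /eqP]]; rewrite (negbTE (fan_neq_u ir)). Qed.

Lemma in_fan_v0 : in_fan v0.
Proof. by apply/in_fanP; exists 0. Qed.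

Lemma fan_colour_missing y : in_fan y -> missing V F col y (fan_colour y).
Proof.
case/in_fanP => i ir <-; rewrite /fan_colour; case: eqP => [->//|ne].
by apply: fmiss; rewrite ltn_neqAle ir andbT; apply: contra_notN ne => /eqP ->.
Qed.

Lemma fan_colourP y : in_fan y -> (y = f r /\ fan_colour y = g) \/
  (exists2 i, i < r & y = f i /\ fan_colour y = col u (f i.+1)).
Proof.
case/in_fanP => i ir <-; rewrite /fan_colour; case: eqP => [e|ne]; first by left.
have ilt : i < r by rewrite ltn_neqAle ir andbT; apply: contra_notN ne => /eqP ->.
by right; exists i; rewrite ?flink.
Qed.

Lemma fan_colour_lt y : in_fan y -> fan_colour y < K.
Proof.
by case/fan_colourP => [[_ ->]//|[i ir [_ ->]]]; apply: col_lt; apply: fF; rewrite ir.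
Qed.

Lemma fan_colour_inj y z : in_fan y -> in_fan z -> fan_colour y = fan_colour z -> y = z.
Proof.
have g_new j : j < r -> g != col u (f j.+1).
  move=> jr; apply/eqP => e.
  have Fj : F u (f j.+1) by apply: fF; rewrite jr.
  by move/missingP: gu => /(_ _ Fj); rewrite e eqxx.
move=> /fan_colourP [[-> ->]|[i ir [-> ->]]] /fan_colourP [[-> ->]|[j jr [-> ->]]] //.
- by move=> e; move: (g_new _ jr); rewrite e eqxx.
- by move=> e; move: (g_new _ ir); rewrite e eqxx.
move/(col_inj (fF _) (fF _)); rewrite ir jr => /(_ isT isT) /finj.
by rewrite ir jr => /(_ isT isT) [->].
Qed.

Lemma fan_colour_out y z :
  in_fan y -> ~~ in_fan z -> F u z -> fan_colour y != col u z.
Proof.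
move=> /fan_colourP [[_ ->]|[i ir [_ ->]]] iz Fuz; apply/eqP => e.
  by move/missingP: gu => /(_ z Fuz); rewrite e eqxx.
have := col_inj (fF (i:=i.+1) _) Fuz e; rewrite ir => /(_ isT) ez.
by move: iz; rewrite -ez; case/negP; apply/in_fanP; exists i.+1.
Qed.

Lemma add_edge_sym : symmetric (add_edge u v0).
Proof.
by move=> x y; rewrite /add_edge Fsym orbAC; congr (_ || _ || _); rewrite andbC.
Qed.

Lemma add_edge_F x y : x != u -> y != u -> add_edge u v0 x y -> F x y.
Proof. by move=> xu yu; rewrite /add_edge (negbTE xu) (negbTE yu) /= ?andbF ?orbF. Qed.

Lemma add_edge_u y : add_edge u v0 u y -> ~~ in_fan y -> F u y.
Proof.
rewrite /add_edge eqxx /= => /orP [/orP [//|/eqP ->]|/andP [/eqP e _]].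
  by rewrite in_fan_v0.
by move: uv0; rewrite e eqxx.
Qed.

Lemma add_edge_out_fan x y : add_edge u v0 x y ->
  ~~ ((x == u) && in_fan y) -> ~~ ((y == u) && in_fan x) -> F x y.
Proof.
move=> Fxy h1 h2.
case: (eqVneq x u) => [ex|xu]; first by subst x; apply: add_edge_u; rewrite eqxx in h1.
case: (eqVneq y u) => [ey|yu]; last exact: add_edge_F.
subst y; rewrite Fsym; apply: add_edge_u; first by rewrite add_edge_sym.
by rewrite eqxx in h2.
Qed.

Lemma fan_rotate_u y : fan_rotate u y = if in_fan y then fan_colour y else col u y.
Proof. by rewrite /fan_rotate eqxx andTb (negbTE notin_fan_u) andbF; case: ifP. Qed.

Lemma fan_rotate_nu x y : x != u ->
  fan_rotate x y = if (y == u) && in_fan x then fan_colour x else col x y.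
Proof. by move=> xu; rewrite /fan_rotate (negbTE xu) andFb. Qed.

Lemma fan_rotate_sym x y : add_edge u v0 x y -> fan_rotate x y = fan_rotate y x.
Proof.
move=> Fxy; rewrite /fan_rotate.
case: (eqVneq x u) => [ex|xu]; first subst x.
  rewrite !andTb (negbTE notin_fan_u) andbF.
  by case: (boolP (in_fan y)) => // /(add_edge_u Fxy); apply: col_sym.
case: (eqVneq y u) => [ey|yu]; first subst y.
  rewrite !andTb (negbTE notin_fan_u) andbF.
  case: (boolP (in_fan x)) => // /(add_edge_u _) Fux.
  by rewrite (col_sym (Fux _)) // add_edge_sym.
by rewrite !andFb; apply: col_sym; apply: add_edge_F.
Qed.

Lemma fan_rotate_colouring : edge_colouring K (add_edge u v0) fan_rotate.
Proof.
split=> [x y Fxy|x y z Fxy Fxz].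
  split; first exact: fan_rotate_sym.
  rewrite /fan_rotate; case: ifP => [/andP [_ /fan_colour_lt] //|h1].
  case: ifP => [/andP [_ /fan_colour_lt] //|h2].
  by apply: col_lt; apply: add_edge_out_fan; rewrite ?h1 ?h2.
case: (eqVneq x u) => [ex|xu].
  subst x; rewrite !fan_rotate_u.
  case: (boolP (in_fan y)) => iy; case: (boolP (in_fan z)) => iz.
  - exact: fan_colour_inj.
  - by move=> e; move: (fan_colour_out iy iz (add_edge_u Fxz iz)); rewrite e eqxx.
  - by move=> e; move: (fan_colour_out iz iy (add_edge_u Fxy iy)); rewrite e eqxx.
  - by apply: col_inj; apply: add_edge_u.
rewrite !fan_rotate_nu //.
have u_new w : w != u -> add_edge u v0 x w -> add_edge u v0 x u ->
    (if in_fan x then fan_colour x else col x u) != col x w.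
  move=> wu Fxw Fxu; have Fxw' := add_edge_F xu wu Fxw.
  case: ifP => ix.
    by apply/eqP => e; move/missingP: (fan_colour_missing ix) => /(_ w Fxw'); rewrite e eqxx.
  have Fxu' : F x u by apply: add_edge_out_fan; rewrite ?ix ?andbF ?(negbTE xu).
  apply/eqP => /(col_inj Fxu' Fxw') e.
  by move: wu; rewrite -e eqxx.
case: (eqVneq y u) => [ey|yu]; case: (eqVneq z u) => [ez|zu]; rewrite ?andTb ?andFb.
- by rewrite ey ez.
- by subst y => e; move: (u_new z zu Fxz Fxy); rewrite e eqxx.
- by subst z => e; move: (u_new y yu Fxy Fxz); rewrite e eqxx.
- by apply: col_inj; apply: add_edge_F.
Qed.

End FanRotation.
End EdgeColouring.

Section AddEdge.
Variables (V : seq nat) (K : nat) (F : rel nat) (col : nat -> nat -> nat) (u v0 : nat).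
Hypotheses (uV : uniq V) (FV : forall x y, F x y -> x \in V)
  (Fsym : symmetric F) (Firr : irreflexive F) (Fcol : edge_colouring K F col)
  (uinV : u \in V) (uv0 : u != v0) (nF : ~~ F u v0)
  (degK : forall x, count (F x) V < K).

Let mc := missing_colour V K F col.

Let mcP x : mc x < K /\ missing V F col x (mc x).
Proof. exact: missing_colourP. Qed.

Definition fan (f : nat -> nat) k :=
  [/\ f 0 = v0, (forall i, 0 < i <= k -> F u (f i)),
      (forall i j, i <= k -> j <= k -> f i = f j -> i = j) &
      (forall i, i < k -> col u (f i.+1) = mc (f i))].

Definition fan_stuck (f : nat -> nat) k :=
  missing V F col u (mc (f k)) \/ exists2 j, 0 < j <= k & col u (f j) = mc (f k).

Lemma fan_size f k : fan f k -> k <= count (F u) V.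
Proof.
case=> _ fF finj _.
have us : uniq [seq f i | i <- iota 1 k].
  rewrite map_inj_in_uniq ?iota_uniq // => i j; rewrite !mem_iota => /andP [i1 ik] /andP [j1 jk].
  by apply: finj; lia.
have := uniq_leq_size us; rewrite size_map size_iota -size_filter; apply.
move=> y /mapP [i]; rewrite mem_iota => /andP [i1 ik] ->.
have Fi : F u (f i) by apply: fF; lia.
by rewrite mem_filter Fi (edge_memr FV Fsym Fi).
Qed.

Lemma fan_stuck_or_grow f k : fan f k -> fan_stuck f k \/ exists f', fan f' k.+1.
Proof.
case=> f0 fF finj flink.
case: (boolP (missing V F col u (mc (f k)))) => [?|used]; first by left; left.
case: (boolP (has (fun j => col u (f j) == mc (f k)) (iota 1 k))) => [/hasP [j] | fresh].
  by rewrite mem_iota => /andP [j1 jk] /eqP e; left; right; exists j => //; lia.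
right; set y := colour_nbr V F col u (mc (f k)).
have [Fuy cuy] : F u y /\ col u y = mc (f k).
  by case: (colour_nbrP V F col u (mc (f k))) => [//|[]]; rewrite (negbTE used).
have yf i : i <= k -> f i != y.
  case: i => [|i] ik; first by rewrite f0; apply/eqP => e; move: nF; rewrite e Fuy.
  apply/eqP => e; move/hasPn: fresh => /(_ i.+1); rewrite mem_iota e cuy eqxx.
  by move=> h; have : false by apply: h; apply/andP; split; lia.
exists (fun i => if i == k.+1 then y else f i); split.
- by rewrite f0.
- move=> i /andP [i0 ik]; case: eqP => // /eqP ne; apply: fF; lia.
- move=> i j ik jk; case: eqP => [->|/eqP ie]; case: eqP => [->|/eqP je] //.
  + by move=> e; move: (yf j ltac:(lia)); rewrite e eqxx.
  + by move=> e; move: (yf i ltac:(lia)); rewrite e eqxx.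
  + apply: finj; lia.
- move=> i ik; case: (eqVneq i k) => [->|ne]; first by rewrite eqxx ltn_eqF.
  have -> : (i.+1 == k.+1) = false by apply/eqP; lia.
  have -> : (i == k.+1) = false by apply/eqP; lia.
  apply: flink; lia.
Qed.

Lemma maximal_fan_exists : exists f k, fan f k /\ fan_stuck f k.
Proof.
suff grow n f k : fan f k -> count (F u) V - k <= n -> exists f k, fan f k /\ fan_stuck f k.
  apply: (grow (count (F u) V) (fun _ => v0) 0); last by rewrite subn0.
  by split => // [i /andP [? ?]|i j]; [lia | rewrite !leqn0 => /eqP -> /eqP ->].
elim: n f k => [|n IH] f k fI dk; case: (fan_stuck_or_grow fI) => [T|[f' fI']];
  try by exists f, k.
  by have := fan_size fI'; lia.
by apply: (IH f' k.+1 fI'); lia.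
Qed.

Lemma add_edge_colouring_free f k : fan f k -> missing V F col u (mc (f k)) ->
  exists col', edge_colouring K (add_edge F u v0) col'.
Proof.
case=> f0 fF finj flink u_free; exists (fan_rotate col u f k mc (mc (f k))).
apply: (fan_rotate_colouring FV Fsym Firr Fcol uv0 f0 fF finj flink) => //.
- by move=> i _; exact: (mcP (f i)).2.
- exact: (mcP _).1.
- exact: (mcP _).2.
Qed.

(* Swapping the colours [mc u] and [mc (f k)] off the Kempe chain through [u]
   makes [mc (f k)] missing at the end of a shorter fan, which is then rotated. *)
Lemma add_edge_colouring_kempe f k j : fan f k -> 0 < j <= k ->
  col u (f j) = mc (f k) -> exists col', edge_colouring K (add_edge F u v0) col'.
Proof.
case=> f0 fF finj flink /andP [j0 jk] cj.
set al := mc u; set be := mc (f k).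
have [alK u_al] := mcP u; have [beK fk_be] := mcP (f k).
have [O [Ou O_al O_be O_end]] := kempe_chain_exists FV Fsym Fcol be uinV u_al.
pose i0 := j.-1; have i0k : i0 < k by rewrite /i0; lia.
have mc_i0 : mc (f i0) = be by rewrite -flink // prednK.
pose r := if O (f i0) then k else i0.
have rk : r <= k by rewrite /r; case: ifP => _ //; apply: ltnW.
have notO_fr : ~~ O (f r).
  rewrite /r; case: ifP => [Oi0|->//]; apply/negP => Ok.
  have /finj : f i0 = f k by apply: O_end => //; rewrite -mc_i0; apply: (mcP _).2.
  by rewrite (ltnW i0k) leqnn => /(_ isT isT) ?; lia.
have mc_fr : mc (f r) = be by rewrite /r; case: ifP.
exists (fan_rotate (kempe_swap col al be O) u f r mc al).
have Fcol' := kempe_swap_colouring Fcol alK beK O_al O_be.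
have swap_u y : kempe_swap col al be O u y = col u y by rewrite /kempe_swap Ou.
apply: (fan_rotate_colouring FV Fsym Firr Fcol' uv0 f0 _ _ _ _ alK _ _).
- move=> i /andP [i0' ir]; apply: fF; lia.
- move=> i i' ir ir'; apply: finj; lia.
- move=> i ir; rewrite swap_u; apply: flink; lia.
- move=> i ir; rewrite missing_kempe_swap; case: ifP => Oi; first exact: (mcP _).2.
  have Fi : F u (f i.+1) by apply: fF; lia.
  have ne_al : mc (f i) != al.
    rewrite -flink; last by lia.
    by move/(missingP col FV Fsym): u_al => /(_ _ Fi).
  have ne_be : mc (f i) != be.
    apply/eqP; rewrite -flink; last by lia.
    rewrite /be -cj => /(col_inj Fcol Fi (fF _ _)) /finj h.
    have ii0 : i = i0 by rewrite /i0; move: h; lia.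
    by move: ir Oi; rewrite /r ii0; case: (O (f i0)); rewrite ?ltnn.
  by rewrite /swap_colour (negbTE ne_al) (negbTE ne_be); exact: (mcP _).2.
- by rewrite missing_kempe_swap Ou.
- rewrite missing_kempe_swap (negbTE notO_fr) /swap_colour eqxx.
  by move: (mcP (f r)).2; rewrite mc_fr.
Qed.

Lemma edge_colouring_add_edge : exists col', edge_colouring K (add_edge F u v0) col'.
Proof.
have [f [k [fI [u_free|[j jk cj]]]]] := maximal_fan_exists.
  exact: add_edge_colouring_free u_free.
exact: add_edge_colouring_kempe cj.
Qed.

End AddEdge.

Lemma count_lt_subpred (T : eqType) (a1 a2 : pred T) s x :
  subpred a1 a2 -> x \in s -> a2 x -> ~~ a1 x -> count a1 s < count a2 s.
Proof.
move=> sub; elim: s => [//|y s IH]; rewrite inE /= => /orP [/eqP <-|xs] a2x a1x.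
  by rewrite (negbTE a1x) a2x add0n add1n ltnS; apply: sub_count.
by rewrite -addnS leq_add ?IH //; case: (a1 y) (sub y) => // ->.
Qed.

Lemma ltn_sum_seq (T : eqType) (f g : T -> nat) s x :
  (forall y, f y <= g y) -> x \in s -> f x < g x ->
  \sum_(y <- s) f y < \sum_(y <- s) g y.
Proof.
move=> le; elim: s => [//|y s IH]; rewrite inE !big_cons => /orP [/eqP <-|xs] lt.
  by rewrite -addSn leq_add // leq_sum.
by rewrite -addnS leq_add // IH.
Qed.

Definition remove_edge (F : rel nat) u v0 x y :=
  F x y && ~~ ((x == u) && (y == v0) || (x == v0) && (y == u)).

Definition edge_count (V : seq nat) (F : rel nat) := \sum_(x <- V) count (F x) V.

Lemma edge_colouring_eq2 K (F1 F2 : rel nat) col :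
  F1 =2 F2 -> edge_colouring K F1 col -> edge_colouring K F2 col.
Proof.
move=> e [h1 h2]; split => [x y|x y z]; rewrite -!e; [exact: h1|exact: h2].
Qed.

Section RemoveEdge.
Variables (V : seq nat) (F : rel nat) (u v0 : nat).
Hypotheses (FV : forall x y, F x y -> x \in V) (Fsym : symmetric F) (Fuv0 : F u v0).

Lemma remove_edge_sym : symmetric (remove_edge F u v0).
Proof.
move=> x y; rewrite /remove_edge Fsym orbC.
by congr (_ && ~~ (_ || _)); rewrite andbC.
Qed.

Lemma add_remove_edge : add_edge (remove_edge F u v0) u v0 =2 F.
Proof.
move=> x y; rewrite /add_edge /remove_edge.
case Fxy: (F x y) => /=.
  by case: (x == u); case: (y == v0); case: (x == v0); case: (y == u).
apply/negP => /orP [] /andP [/eqP ex /eqP ey]; subst x y.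
  by rewrite Fuv0 in Fxy.
by rewrite Fsym Fuv0 in Fxy.
Qed.

Lemma edge_count_remove_edge :
  edge_count V (remove_edge F u v0) < edge_count V F.
Proof.
have sub x : subpred (remove_edge F u v0 x) (F x) by move=> y /andP [].
apply: (ltn_sum_seq (x := u)) => [y||]; first exact: sub_count.
  exact: FV Fuv0.
apply: (count_lt_subpred (x := v0)) => //; first exact: edge_memr Fuv0.
by rewrite /remove_edge Fuv0 !eqxx.
Qed.

End RemoveEdge.

Theorem vizing (V : seq nat) (D : nat) (F : rel nat) : uniq V ->
  (forall x y, F x y -> x \in V) -> symmetric F -> irreflexive F ->
  (forall x, count (F x) V <= D) -> exists col, edge_colouring D.+1 F col.
Proof.
move=> uV; move: {-1}(edge_count V F).+1 (ltnSn (edge_count V F)) => N.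
elim: N F => // N IH F FN FV Fsym Firr Fdeg.
case: (boolP (has (fun x => has (F x) V) V)) => [/hasP [u uV' /hasP [v0 _ Fuv0]]|noF].
  pose F0 := remove_edge F u v0.
  have F0F x y : F0 x y -> F x y by case/andP.
  have F0V x y : F0 x y -> x \in V by move/F0F/FV.
  have F0sym : symmetric F0 := remove_edge_sym u v0 Fsym.
  have F0irr : irreflexive F0 by move=> x; rewrite /F0 /remove_edge Firr.
  have F0deg x : count (F0 x) V <= D.
    by apply: leq_trans (Fdeg x); apply: sub_count => y /F0F.
  have [col0 Fcol0] := IH F0 (leq_trans (edge_count_remove_edge FV Fsym Fuv0) FN)
    F0V F0sym F0irr F0deg.
  have uv0 : u != v0 by apply: contraPneq Fuv0 => ->; rewrite Firr.
  have nF0 : ~~ F0 u v0 by rewrite /F0 /remove_edge !eqxx andbF.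
  have [col Fcol] := edge_colouring_add_edge uV F0V F0sym F0irr Fcol0 uV' uv0 nF0 F0deg.
  by exists col; apply: edge_colouring_eq2 Fcol; apply: add_remove_edge.
exists (fun _ _ => 0); split=> [x y Fxy|x y z Fxy]; exfalso;
  by move/hasPn: noF => /(_ x (FV _ _ Fxy)) /hasP; apply; exists y;
    [apply: edge_memr Fxy|].
Qed.

Lemma count_sum (T : Type) (P : pred T) s : count P s = \sum_(x <- s) (P x : nat).
Proof. by rewrite -sum1_count big_mkcond. Qed.

Lemma sum_const_iota K x : \sum_(c <- iota 0 K) x = K * x.
Proof. by rewrite big_const_seq count_predT size_iota iter_addn_0 mulnC. Qed.

Section MatchingSums.
Variables (V : seq nat) (G : rel nat) (M : nat -> option nat).
Hypotheses (uV : uniq V) (GV : forall x y, G x y -> y \in V)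
  (Mmatch : is_matching V G M).

Lemma matching_partner_mem v u : v \in V -> M v = Some u -> u \in V.
Proof. by move=> vV /(Mmatch vV) [/GV]. Qed.

Lemma sum_partner (h : nat -> nat -> nat) v : v \in V ->
  \sum_(u <- V) (if M v == Some u then h v u else 0) =
  (if M v is Some u then h v u else 0).
Proof.
move=> vV; case Mv: (M v) => [u|]; last by rewrite big1.
rewrite (bigD1_seq u) ?(matching_partner_mem vV Mv) //= eqxx big1 ?addn0 // => w wu.
by case: eqP => // [[uw]]; move: wu; rewrite uw eqxx.
Qed.

Lemma sum_matching_swap (h : nat -> nat -> nat) :
  \sum_(v <- V) (if M v is Some u then h v u else 0) =
  \sum_(v <- V) (if M v is Some u then h u v else 0).
Proof.
transitivity (\sum_(v <- V) \sum_(u <- V) (if M v == Some u then h v u else 0)).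
  by rewrite big_seq [RHS]big_seq; apply: eq_bigr => v vV; rewrite sum_partner.
rewrite exchange_big big_seq [RHS]big_seq; apply: eq_bigr => u uV'.
rewrite -(sum_partner (fun u v => h v u)) // big_seq [RHS]big_seq.
apply: eq_bigr => v vV; congr (if _ then _ else _).
by apply/eqP/eqP => [/(Mmatch vV) []|/(Mmatch uV') []].
Qed.

Lemma sum_matched_pairs (S : nat -> bool) : irreflexive G ->
  \sum_(v <- V) (if M v is Some u then if v < u then (S v + S u)%N else 0 else 0) =
  count (fun v => S v && matched M v) V.
Proof.
move=> Girr; have /= := sum_matching_swap (fun v u => if v < u then S u : nat else 0).
rewrite count_sum => swap_sum.
transitivity (\sum_(v <- V) ((if M v is Some u then if v < u then S v : nat else 0 else 0)
                       + (if M v is Some u then if v < u then S u : nat else 0 else 0))).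
  by apply: eq_bigr => v _; case: (M v) => // u; case: ifP.
rewrite big_split /= swap_sum -big_split big_seq [RHS]big_seq; apply: eq_bigr => v vV.
rewrite /matched; case Mv: (M v) => [u|] /=; last by rewrite andbF.
have uv : u != v by apply: contraPneq (Mmatch vV Mv) => -> [/negP]; rewrite Girr.
by rewrite andbT; case: (ltngtP v u) uv => [_|_|->]; rewrite ?addn0 ?eqxx.
Qed.

End MatchingSums.

Definition colour_class (V : seq nat) (G : rel nat) (col : nat -> nat -> nat) c v :=
  if colour_nbr V G col v c == v then None else Some (colour_nbr V G col v c).

Section ColourClasses.
Variables (V : seq nat) (K : nat) (G : rel nat) (col : nat -> nat -> nat).
Hypotheses (uV : uniq V) (GV : forall x y, G x y -> x \in V)
  (Gsym : symmetric G) (Girr : irreflexive G) (Gcol : edge_colouring K G col).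

Lemma colour_class_matching c : is_matching V G (colour_class V G col c).
Proof.
move=> v y vV; rewrite /colour_class; case: eqP => // ne [<-].
case: (colour_nbrP V G col v c) => [[Gvy cy]|[_ e]]; last by case: ne.
split => //; rewrite (colour_nbrK GV Gsym Gcol).
by case: eqP => // ev; move: Gvy; rewrite -ev Girr.
Qed.

Lemma matched_colour_class c v :
  matched (colour_class V G col c) v = ~~ missing V G col v c.
Proof.
rewrite /matched /colour_class; case: (colour_nbrP V G col v c) => [[Gvy cy]|[m e]].
  rewrite ifN; last by apply: contraTneq Gvy => ->; rewrite Girr.
  by apply/esym/negP => /(missingP col GV Gsym) /(_ _ Gvy); rewrite cy eqxx.
by rewrite e eqxx m.
Qed.

Lemma sum_colour_class_hits (S : nat -> bool) :
  \sum_(c <- iota 0 K) count (fun v => S v && matched (colour_class V G col c) v) V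
  = \sum_(v <- V) S v * count (G v) V.
Proof.
under eq_bigr => c _ do rewrite count_sum.
rewrite exchange_big; apply: eq_bigr => v _.
rewrite -(count_missing_colours uV Gcol) count_sum big_distrr /=.
by apply: eq_bigr => c _; rewrite matched_colour_class; case: (S v); rewrite ?mul1n.
Qed.

End ColourClasses.

Local Open Scope ring_scope.

Lemma approx_ge_average (R : realFieldType) (eps : R) (K d s m : nat) (h : nat -> nat) :
  (0 < K)%N -> (d * s <= \sum_(c <- iota 0 K) h c)%N ->
  (forall c, (c < K)%N -> (1 - eps) * (h c)%:R <= m%:R :> R) ->
  (1 - eps) * (d%:R / K%:R) * s%:R <= m%:R :> R.
Proof.
move=> K0 ds_le h_le; case: (lerP eps 1) => [eps1|eps1]; last first.
  apply: le_trans (ler0n _ m); rewrite -mulrA.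
  apply: mulr_le0_ge0; first by rewrite subr_le0 ltW.
  by apply: mulr_ge0; [apply: divr_ge0|]; rewrite ler0n.
rewrite -mulrA mulrAC -natrM mulrA ler_pdivrMr ?ltr0n // -natrM.
apply: le_trans (_ : (1 - eps) * (\sum_(c <- iota 0 K) h c)%:R <= _).
  by rewrite ler_wpM2l ?subr_ge0 ?ler_nat.
rewrite mulnC -sum_const_iota !natr_sum mulr_sumr big_seq [X in _ <= X]big_seq.
by apply: ler_sum => c; rewrite mem_iota => /h_le.
Qed.

Lemma ball_subrel V (E1 E2 : rel nat) r v :
  subrel E1 E2 -> {subset ball V E1 r v <= ball V E2 r v}.
Proof.
move=> sub; elim: r => [//|r IH] x /=.
rewrite !mem_filter => /andP [/orP [/IH xb|/hasP [z zb Ezx]] ->]; rewrite andbT ?xb //.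
by apply/orP; right; apply/hasP; exists z; [apply: IH | apply: sub].
Qed.

Lemma ball_mem V E r v : v \in V -> {subset ball V E r v <= V}.
Proof.
move=> vV; case: r => [|r] x /=; first by rewrite inE => /eqP ->.
by rewrite mem_filter => /andP [].
Qed.

Lemma ball_succ V E r v x : x \in V -> x \in ball V E r v -> x \in ball V E r.+1 v.
Proof. by move=> xV xb /=; rewrite mem_filter xb xV. Qed.

Lemma ball_nbr V (E : rel nat) r v x y :
  x \in ball V E r v -> y \in V -> E x y -> y \in ball V E r.+1 v.
Proof. by move=> xb yV Exy /=; rewrite mem_filter yV andbT; apply/orP; right; apply/hasP; exists x. Qed.

Lemma two_le_size (V : seq nat) x y :
  uniq V -> x \in V -> y \in V -> x != y -> (2 <= size V)%N.
Proof.
move=> uV xV yV xy; have : uniq [:: x; y] by rewrite /= inE xy.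
by move/uniq_leq_size; apply => z; rewrite !inE => /orP [] /eqP ->.
Qed.

Definition S_edges (S : nat -> bool) (E : rel nat) : rel nat :=
  fun x y => E x y && (S x || S y).

Definition S_weight (R : numDomainType) (S : nat -> bool) : nat -> nat -> R :=
  fun x y => (S x + S y)%:R.

Lemma S_edges_sub S E : subrel (S_edges S E) E.
Proof. by move=> x y /andP []. Qed.

Lemma S_edges_simple n k D V E S el : S_class n k D V E S el ->
  [/\ forall x y, S_edges S E x y -> (x \in V) && (y \in V),
      irreflexive (S_edges S E) & symmetric (S_edges S E)].
Proof.
move=> [[_ [EV Eirr Esym]] _]; split=> [x y /S_edges_sub /EV //|x|x y].
  by rewrite /S_edges (negbTE (Eirr x)).
by rewrite /S_edges Esym orbC.
Qed.

Lemma AM_class_S_edges (R : numDomainType) n k D c V E S el :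
  S_class n k D V E S el -> (1 <= c)%N ->
  AM_class (R:=R) n k D c V (S_edges S E) (fun _ => tt) (S_weight R S).
Proof.
move=> P c1; have [GV Girr Gsym] := S_edges_simple P.
case: P => [[[uV sV idV] _] dD].
have GE := @S_edges_sub S E.
split.
- by split=> //; split=> // x; rewrite Girr.
- by move=> v vV; apply: leq_trans (dD v vV); apply: sub_count => y /GE.
- by move=> x y /andP [_]; rewrite /S_weight ltr0n; case: (S x); case: (S y).
- by move=> x y; rewrite /S_weight addnC.
move=> x y x' y' Gxy Gxy'; rewrite /S_weight -natrM ler_nat.
have /andP [xV yV] := GV _ _ Gxy.
have xy : x != y by apply: contraTneq Gxy => ->; rewrite Girr.
have n2 : (2 <= n)%N by rewrite -sV; apply: two_le_size xy.
have nc : (n <= n ^ c)%N by rewrite -{1}(expn1 n) leq_pexp2l //; lia.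
have w'_pos : (0 < S x' + S y')%N by case/andP: Gxy' => _; case: (S x'); case: (S y').
have w_le2 : (S x + S y <= 2)%N by case: (S x); case: (S y).
by apply: leq_trans w_le2 (leq_trans n2 (leq_trans nc _)); rewrite leq_pmulr.
Qed.

Lemma mweight_S_weight (R : numDomainType) V G S M :
  uniq V -> irreflexive G -> (forall x y, G x y -> y \in V) ->
  is_matching V G M ->
  mweight V (S_weight R S) M = (count (fun v => S v && matched M v) V)%:R.
Proof.
move=> uV Girr GV Mmatch; rewrite -(sum_matched_pairs uV GV Mmatch S Girr) natr_sum.
by apply: eq_bigr => v _; case: (M v) => // u; case: ifP.
Qed.

Lemma same_view_S_edges (R : numDomainType) T v (V1 V2 : seq nat) (E1 E2 : rel nat)
    (S1 S2 : nat -> bool) (el1 el2 : nat -> nat -> unit) :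
  (forall x y, E1 x y -> y \in V1) -> v \in V1 ->
  same_view T v V1 E1 S1 el1 V2 E2 S2 el2 ->
  same_view T v V1 (S_edges S1 E1) (fun _ => tt) (S_weight R S1)
                V2 (S_edges S2 E2) (fun _ => tt) (S_weight R S2).
Proof.
move=> EV1 vV [sameS sameE]; split=> [//|x y T0 xb].
have xb' : x \in ball V1 E1 T.-1 v := ball_subrel (@S_edges_sub S1 E1) xb.
have [E12 _] := sameE x y T0 xb'.
have TS : T = T.-1.+1 by rewrite prednK.
have Sx : S1 x = S2 x.
  by apply: sameS; rewrite TS ball_succ // (ball_mem vV xb').
rewrite /S_edges -E12; case E1xy: (E1 x y) => //=.
have Sy : S1 y = S2 y.
  by apply: sameS; rewrite TS; apply: ball_nbr xb' (EV1 _ _ E1xy) E1xy.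
by rewrite /S_weight Sx Sy.
Qed.

Lemma local_alg_S_edges (R : numDomainType) n k D c T (A : algo unit R) :
  (1 <= c)%N -> local_alg (AM_class n k D c) T A ->
  local_alg (S_class n k D) T
    (fun V E S _ => A V (S_edges S E) (fun _ => tt) (S_weight R S)).
Proof.
move=> c1 locA V1 E1 S1 el1 V2 E2 S2 el2 v P1 P2 vV1 vV2 view.
have EV1 x y : E1 x y -> y \in V1 by case: P1 => [[_ [EV1 _ _]] _] /EV1 /andP [].
have view_S := same_view_S_edges R EV1 vV1 view.
exact: locA (AM_class_S_edges R P1 c1) (AM_class_S_edges R P2 c1) vV1 vV2 view_S.
Qed.

Lemma S_edges_colour_class_hits n k D V E S el (delta : nat) :
  S_class n k D V E S el -> {in V, forall v, S v -> (delta <= deg V E v)%N} ->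
  exists col, edge_colouring (max_deg V E).+1 (S_edges S E) col /\
    (delta * count S V <= \sum_(c <- iota 0 (max_deg V E).+1)
       count (fun v => S v && matched (colour_class V (S_edges S E) col c) v) V)%N.
Proof.
move=> P hdelta; have [GVV Girr Gsym] := S_edges_simple P.
have [[[uV _ _] _] _] := P; set G := S_edges S E.
have GV x y : G x y -> x \in V by move/GVV/andP => [].
have degG x : (count (G x) V <= max_deg V E)%N.
  case: (boolP (x \in V)) => xV.
    apply: leq_trans (_ : deg V E x <= _)%N; first by apply: sub_count => y /S_edges_sub.
    exact: (@leq_bigmax_seq _ V xpredT (deg V E) x xV).
  suff -> : count (G x) V = 0%N by [].
  by apply/eqP; rewrite -leqn0 leqNgt -has_count; apply: contra xV => /hasP [y _ /GV].
have [col Gcol] := vizing uV GV Gsym Girr degG.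
exists col; split => //; rewrite sum_colour_class_hits //.
apply: leq_trans (_ : \sum_(v <- V) delta * S v <= _)%N.
  by apply: eq_leq; rewrite count_sum big_distrr.
rewrite big_seq [X in (_ <= X)%N]big_seq; apply: leq_sum => v vV.
case Sv: (S v); rewrite ?muln0 ?mul1n ?muln1 //.
rewrite (eq_count (a2 := E v)) => [|y]; first exact: hdelta v vV Sv.
by rewrite /G /S_edges Sv orTb andbT.
Qed.

Theorem lemma2p6 (R : realFieldType) (n k D c T : nat) (eps : R) :
  0 < eps -> (1 <= c)%N ->
  (exists A : algo unit R,
      local_alg (AM_class (R:=R) n k D c) T A /\ AM_correct n k D c eps A) ->
  exists B : algo bool unit,
      local_alg (S_class n k D) T B /\ S_correct n k D eps B.
Proof.
move=> _ c1 [A [locA corA]].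
exists (fun V E S _ => A V (S_edges S E) (fun _ => tt) (S_weight R S)).
split; first exact: local_alg_S_edges c1 locA.
move=> V E S P /=; have [GVV Girr Gsym] := S_edges_simple P.
have [[[uV _ _] _] _] := P.
have GVl x y : S_edges S E x y -> x \in V by move/GVV/andP => [].
have GVr x y : S_edges S E x y -> y \in V by move/GVV/andP => [].
have [Mmatch _ Mopt] := corA V (S_edges S E) (S_weight R S) (AM_class_S_edges R P c1).
split=> [v u vV /(Mmatch v u vV) [/S_edges_sub] //|delta hdelta].
have [col [Gcol hits]] := S_edges_colour_class_hits P hdelta.
apply: approx_ge_average hits _ => // i _.
have Mi := colour_class_matching GVl Gsym Girr Gcol (c := i).
by have := Mopt _ Mi; rewrite !(mweight_S_weight _ _ uV Girr GVr).
Qed.
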